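(* Let $d\ge 1$ be an integer and $\kappa>0$. Define $g:[0,\infty)\to\mathbb{R}$ by $$g(\eta)=\frac{\eta}{\kappa}\int_0^\pi \exp(\eta\cos\theta)\sin^{d-1}\theta\,d\theta-\int_0^\pi \cos\theta\,\exp(\eta\cos\theta)\sin^{d-1}\theta\,d\theta .$$ Then: (1) If $0<\kappa\le d+1$, then $g(\eta)=0$ if and only if $\eta=0$. (2) If $\kappa>d+1$, then the equation $g(\eta)=0$ has exactly two solutions in $[0,\infty)$: $\eta_1=0$ and some $\eta_2\in(0,\kappa)$. *)

From Stdlib Require Import Reals Lra Lia.
From Coquelicot Require Import Coquelicot.
Open Scope R_scope.

Definition g_fun (d : nat) (kappa eta : R) : R :=
  eta / kappa * RInt (fun t => exp (eta * cos t) * sin t ^ (d - 1)) 0 PI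
  - RInt (fun t => cos t * exp (eta * cos t) * sin t ^ (d - 1)) 0 PI.

From Stdlib Require Import Reals Lra Lia.
From Coquelicot Require Import Coquelicot.
Open Scope R_scope.

(* Let I_k(eta) be the integral over [0, PI] of cos^k t exp(eta cos t) sin^(d-1) t, so
   that g = (eta/kappa) I_0 - I_1, I_k' = I_(k+1), and integration by parts gives
   d I_1 = eta (I_0 - I_2).  By this recurrence the functions
   eta^d ((d+1) I_1 - eta I_0) and eta^d (eta I_0^2 - (d+1) I_0 I_1 - eta I_1^2)
   vanish at 0 and decrease, hence are negative for eta > 0.  The first gives
   eta I_0 > (d+1) I_1 >= kappa I_1, i.e. g > 0, when kappa <= d+1.  The second makes
   I_1 / (eta I_0) strictly decreasing, and a positive zero of g is exactly a point where
   this ratio equals 1/kappa, so there is at most one.  When kappa > d+1, differentiating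
   the recurrence at 0 gives (d+1) I_2(0) = I_0(0), hence
   g'(0) = I_0(0) (1/kappa - 1/(d+1)) < 0, while g(kappa) = I_0(kappa) - I_1(kappa) > 0,
   so a zero lies in (0, kappa). *)

Lemma strict_decreasing_of_derive_neg (f f' : R -> R) (a b : R) :
  a < b -> (forall x, a <= x <= b -> is_derive f x (f' x)) ->
  (forall x, a < x < b -> f' x < 0) -> f b < f a.
Proof.
  intros Hab Hder Hneg.
  destruct (MVT_cor2 f f' a b Hab) as [c [Hmvt Hc]].
  - intros c Hc. apply is_derive_Reals, Hder, Hc.
  - specialize (Hneg c Hc). nra.
Qed.

Lemma is_derive_neg_lt_right (f : R -> R) (x l b : R) :
  is_derive f x l -> l < 0 -> x < b -> exists y, x < y < b /\ f y < f x.
Proof.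
  intros Hder Hl Hxb.
  apply is_derive_Reals in Hder.
  destruct (Hder (- l / 2) ltac:(lra)) as [delta Hdelta].
  pose proof (cond_pos delta) as Hdelta_pos.
  set (h := Rmin (delta / 2) ((b - x) / 2)).
  assert (Hh : 0 < h <= (b - x) / 2).
  { split; [apply Rmin_glb_lt; lra | apply Rmin_r]. }
  assert (Hh_delta : Rabs h < delta).
  { assert (h <= delta / 2) by apply Rmin_l. rewrite Rabs_pos_eq; lra. }
  specialize (Hdelta h (Rgt_not_eq _ _ (proj1 Hh)) Hh_delta).
  apply Rabs_def2 in Hdelta.
  assert (Hquot : (f (x + h) - f x) / h < 0) by lra.
  exists (x + h). split; [lra|].
  assert (Hdiff : f (x + h) - f x = (f (x + h) - f x) / h * h) by (field; lra).
  nra.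
Qed.

Lemma cos_open_bound (t : R) : 0 < t < PI -> -1 < cos t < 1.
Proof.
  intros [Ht0 HtPI]. pose proof PI_RGT_0.
  rewrite <- cos_PI, <- cos_0.
  split; apply cos_decreasing_1; lra.
Qed.

Lemma is_RInt_derive_eq_0 (P D : R -> R) (a b : R) :
  (forall t, is_derive P t (D t)) -> (forall t, continuous D t) -> P a = P b ->
  is_RInt D a b 0.
Proof.
  intros Hder Hcont Hab.
  replace 0 with (minus (P b) (P a)) by (rewrite Hab; unfold minus, plus, opp; simpl; ring).
  apply (is_RInt_derive (V := R_CompleteNormedModule)); intros t _; auto.
Qed.

Lemma sin_pow2 (t : R) : sin t ^ 2 = 1 - cos t ^ 2.
Proof. pose proof (sin2_cos2 t) as H. unfold Rsqr in H. simpl. lra. Qed.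

Lemma continuity_2d_pt_snd (h : R -> R) (x y : R) :
  continuity h -> continuity_2d_pt (fun _ v => h v) x y.
Proof.
  intros Hh. apply (continuity_1d_2d_pt_comp h (fun _ v => v)).
  - apply Hh.
  - apply continuity_2d_pt_id2.
Qed.

(* [auto_derive] unfolds [INR (S m)] by one step; this folds it back. *)
Ltac fold_INR_S :=
  repeat match goal with
  | |- context [match ?m with 0%nat => 1 | S _ => INR ?m + 1 end] =>
      change (match m with 0%nat => 1 | S _ => INR m + 1 end) with (INR (S m))
  end.

Section Moments.

Variable n : nat.

Definition moment_integrand (k : nat) (eta t : R) : R :=
  cos t ^ k * exp (eta * cos t) * sin t ^ n.

Definition moment (k : nat) (eta : R) : R := RInt (moment_integrand k eta) 0 PI.

Lemma is_derive_moment_integrand (k : nat) (eta t : R) :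
  is_derive (fun z => moment_integrand k z t) eta (moment_integrand (S k) eta t).
Proof. unfold moment_integrand. auto_derive; [exact I | simpl; ring]. Qed.

Lemma continuous_moment_integrand (k : nat) (eta t : R) :
  continuous (moment_integrand k eta) t.
Proof.
  apply (ex_derive_continuous (K := R_AbsRing) (V := R_NormedModule)).
  unfold moment_integrand. auto_derive. exact I.
Qed.

Lemma ex_RInt_moment_integrand (k : nat) (eta : R) :
  ex_RInt (moment_integrand k eta) 0 PI.
Proof.
  apply (ex_RInt_continuous (V := R_CompleteNormedModule)).
  intros t _. apply continuous_moment_integrand.
Qed.

Lemma is_RInt_moment (k : nat) (eta : R) :
  is_RInt (moment_integrand k eta) 0 PI (moment k eta).
Proof. apply (RInt_correct (V := R_CompleteNormedModule)), ex_RInt_moment_integrand. Qed.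

Lemma continuity_2d_pt_moment_integrand (k : nat) (eta t : R) :
  continuity_2d_pt (fun u v => moment_integrand k u v) eta t.
Proof.
  apply (continuity_2d_pt_ext (fun u v => exp (u * cos v) * (cos v ^ k * sin v ^ n))).
  { intros u v. unfold moment_integrand. ring. }
  apply continuity_2d_pt_mult.
  - apply (continuity_1d_2d_pt_comp exp (fun u v => u * cos v)).
    + apply derivable_continuous_pt, derivable_pt_exp.
    + apply continuity_2d_pt_mult; [apply continuity_2d_pt_id1|].
      apply continuity_2d_pt_snd, continuity_cos.
  - apply continuity_2d_pt_snd. reg.
Qed.

Lemma is_derive_moment (k : nat) (eta : R) :
  is_derive (moment k) eta (moment (S k) eta).
Proof.
  unfold moment.
  rewrite (RInt_ext (moment_integrand (S k) eta)
                    (fun t => Derive (fun z => moment_integrand k z t) eta)).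
  2: { intros t _. symmetry. apply is_derive_unique, is_derive_moment_integrand. }
  apply (is_derive_RInt_param (fun u t => moment_integrand k u t)).
  - apply filter_forall. intros u t _. eexists. apply is_derive_moment_integrand.
  - intros t _.
    apply (continuity_2d_pt_ext (fun u v => moment_integrand (S k) u v)).
    + intros u v. symmetry. apply is_derive_unique, is_derive_moment_integrand.
    + apply continuity_2d_pt_moment_integrand.
  - apply filter_forall. intros u. apply ex_RInt_moment_integrand.
Qed.

Lemma ex_derive_moment (k : nat) (eta : R) : ex_derive (moment k) eta.
Proof. eexists. apply is_derive_moment. Qed.

Lemma Derive_moment (k : nat) (eta : R) : Derive (moment k) eta = moment (S k) eta.
Proof. apply is_derive_unique, is_derive_moment. Qed.

Lemma moment_recurrence (eta : R) :
  INR (S n) * moment 1 eta = eta * (moment 0 eta - moment 2 eta).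
Proof.
  set (D t := INR (S n) * moment_integrand 1 eta t
              - eta * (moment_integrand 0 eta t - moment_integrand 2 eta t)).
  assert (Hcomb : is_RInt D 0 PI
                    (INR (S n) * moment 1 eta - eta * (moment 0 eta - moment 2 eta))).
  { apply (is_RInt_minus (V := R_NormedModule)); apply (is_RInt_scal (V := R_NormedModule)).
    - apply is_RInt_moment.
    - apply (is_RInt_minus (V := R_NormedModule)); apply is_RInt_moment. }
  assert (Hparts : is_RInt D 0 PI 0).
  { apply (is_RInt_derive_eq_0 (fun t => sin t ^ S n * exp (eta * cos t))).
    - intros t. unfold D, moment_integrand. auto_derive; [exact I|].
      fold_INR_S.
      replace (sin t * sin t ^ n * (eta * (1 * - sin t) * exp (eta * cos t)))
        with (- eta * exp (eta * cos t) * sin t ^ n * sin t ^ 2) by ring.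
      rewrite sin_pow2. ring.
    - intros t. unfold D.
      apply (ex_derive_continuous (K := R_AbsRing) (V := R_NormedModule)).
      unfold moment_integrand. auto_derive. exact I.
    - rewrite sin_PI, sin_0. simpl. ring. }
  pose proof (is_RInt_unique _ _ _ _ Hcomb) as H1.
  pose proof (is_RInt_unique _ _ _ _ Hparts) as H2.
  lra.
Qed.

Lemma moment2_at_0 : (INR (S n) + 1) * moment 2 0 = moment 0 0.
Proof.
  assert (Hl : is_derive (fun e => INR (S n) * moment 1 e) 0 (INR (S n) * moment 2 0)).
  { auto_derive; [apply ex_derive_moment|]. fold_INR_S. rewrite Derive_moment. ring. }
  assert (Hr : is_derive (fun e => e * (moment 0 e - moment 2 e)) 0 (moment 0 0 - moment 2 0)).
  { auto_derive; [repeat split; apply ex_derive_moment|]. rewrite !Derive_moment. ring. }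
  apply (is_derive_ext _ _ _ _ moment_recurrence), is_derive_unique in Hl.
  apply is_derive_unique in Hr.
  assert (Hlr : INR (S n) * moment 2 0 = moment 0 0 - moment 2 0)
    by (rewrite <- Hl, <- Hr; reflexivity).
  lra.
Qed.

Lemma moment0_pos (eta : R) : 0 < moment 0 eta.
Proof.
  apply RInt_gt_0; [exact PI_RGT_0| |intros; apply continuous_moment_integrand].
  intros t Ht. unfold moment_integrand.
  pose proof (sin_gt_0 t (proj1 Ht) (proj2 Ht)) as Hsin.
  pose proof (exp_pos (eta * cos t)). pose proof (pow_lt (sin t) n Hsin).
  simpl. nra.
Qed.

Lemma moment_lt_moment (k l : nat) (eta : R) :
  (forall c, -1 < c < 1 -> c ^ k < c ^ l) -> moment k eta < moment l eta.
Proof.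
  intros Hkl. apply RInt_lt; [exact PI_RGT_0| intros; apply continuous_moment_integrand ..|].
  intros t Ht. unfold moment_integrand.
  pose proof (sin_gt_0 t (proj1 Ht) (proj2 Ht)) as Hsin.
  pose proof (exp_pos (eta * cos t)). pose proof (pow_lt (sin t) n Hsin).
  pose proof (Hkl (cos t) (cos_open_bound t Ht)).
  apply Rmult_lt_compat_r; [auto|]. apply Rmult_lt_compat_r; auto.
Qed.

Lemma moment1_lt_moment0 (eta : R) : moment 1 eta < moment 0 eta.
Proof. apply moment_lt_moment. intros c Hc. simpl. lra. Qed.

Lemma moment2_lt_moment0 (eta : R) : moment 2 eta < moment 0 eta.
Proof. apply moment_lt_moment. intros c Hc. simpl. nra. Qed.

Lemma moment1_at_0 : moment 1 0 = 0.
Proof.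
  pose proof (moment_recurrence 0) as Hrec. pose proof (lt_0_INR (S n) ltac:(lia)).
  rewrite Rmult_0_l in Hrec. nra.
Qed.

Lemma moment1_pos (eta : R) : 0 < eta -> 0 < moment 1 eta.
Proof.
  intros Heta. pose proof (moment_recurrence eta) as Hrec.
  pose proof (moment2_lt_moment0 eta). pose proof (lt_0_INR (S n) ltac:(lia)).
  nra.
Qed.

(* The weight [e ^ (n + 1)] makes [psi] vanish at 0 and, by the recurrence, leaves a
   single term in its derivative; the same trick handles [K] below. *)
Lemma moment1_lt_eta_moment0 (eta : R) :
  0 < eta -> (INR (S n) + 1) * moment 1 eta < eta * moment 0 eta.
Proof.
  intros Heta.
  pose (psi e := e ^ S n * ((INR (S n) + 1) * moment 1 e - e * moment 0 e)).
  assert (Hpsi : psi eta < psi 0).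
  { apply (strict_decreasing_of_derive_neg psi (fun e => - e ^ S (S n) * moment 1 e));
      [exact Heta| |].
    - intros e _. unfold psi.
      auto_derive; [repeat split; apply ex_derive_moment|].
      fold_INR_S. rewrite !Derive_moment.
      pose proof (f_equal (Rmult (e ^ n * (INR (S n) + 1))) (moment_recurrence e)).
      simpl pow. lra.
    - intros e He. pose proof (moment1_pos e (proj1 He)).
      pose proof (pow_lt e (S (S n)) (proj1 He)). nra. }
  unfold psi in Hpsi. rewrite pow_i in Hpsi by lia.
  pose proof (pow_lt eta (S n) Heta). nra.
Qed.

Lemma moment_discriminant_neg (eta : R) : 0 < eta ->
  eta * moment 0 eta ^ 2 - (INR (S n) + 1) * moment 0 eta * moment 1 eta
  - eta * moment 1 eta ^ 2 < 0.
Proof.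
  intros Heta.
  pose (K e := e ^ S n * (e * moment 0 e ^ 2 - (INR (S n) + 1) * moment 0 e * moment 1 e
                          - e * moment 1 e ^ 2)).
  assert (HK : K eta < K 0).
  { apply (strict_decreasing_of_derive_neg K (fun e => - 2 * e ^ S n * moment 1 e ^ 2));
      [exact Heta| |].
    - intros e _. unfold K.
      auto_derive; [repeat split; apply ex_derive_moment|].
      fold_INR_S. rewrite !Derive_moment.
      pose proof (f_equal (Rmult (e ^ n * (- (INR (S n) + 1) * moment 0 e - 2 * e * moment 1 e)))
                          (moment_recurrence e)).
      simpl pow. lra.
    - intros e He. pose proof (moment1_pos e (proj1 He)).
      pose proof (pow_lt e (S n) (proj1 He)).
      pose proof (pow_lt (moment 1 e) 2 ltac:(lra)). nra. }
  unfold K in HK. rewrite pow_i in HK by lia.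
  pose proof (pow_lt eta (S n) Heta). nra.
Qed.

Definition moment_ratio (eta : R) : R := moment 1 eta / (eta * moment 0 eta).

Lemma moment_ratio_decreasing (a b : R) :
  0 < a < b -> moment_ratio b < moment_ratio a.
Proof.
  intros Hab.
  apply (strict_decreasing_of_derive_neg moment_ratio (fun e =>
    (e * moment 2 e * moment 0 e - moment 1 e * (moment 0 e + e * moment 1 e))
    / (e * moment 0 e) ^ 2)); [lra| |].
  - intros e He. pose proof (moment0_pos e).
    unfold moment_ratio. auto_derive.
    + repeat split; try apply ex_derive_moment. apply Rmult_integral_contrapositive; lra.
    + rewrite !Derive_moment. field. lra.
  - intros e He. pose proof (moment0_pos e).
    pose proof (moment_discriminant_neg e ltac:(lra)).
    pose proof (f_equal (Rmult (moment 0 e)) (moment_recurrence e)).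
    assert (Hnum : e * moment 2 e * moment 0 e - moment 1 e * (moment 0 e + e * moment 1 e) < 0)
      by (simpl pow in *; lra).
    apply Rdiv_neg_pos; [exact Hnum|].
    apply pow_lt, Rmult_lt_0_compat; lra.
Qed.

End Moments.

Section GFun.

Variables (n : nat) (kappa : R).
Hypothesis kappa_pos : 0 < kappa.

Lemma g_fun_moment (eta : R) :
  g_fun (S n) kappa eta = eta / kappa * moment n 0 eta - moment n 1 eta.
Proof.
  unfold g_fun, moment, moment_integrand. rewrite Nat.sub_succ, Nat.sub_0_r.
  f_equal; [f_equal|]; apply RInt_ext; intros t _; simpl; ring.
Qed.

Lemma is_derive_g_fun (eta : R) :
  is_derive (g_fun (S n) kappa) eta
    (/ kappa * moment n 0 eta + eta / kappa * moment n 1 eta - moment n 2 eta).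
Proof.
  apply (is_derive_ext (fun e => e / kappa * moment n 0 e - moment n 1 e)).
  { intros e. symmetry. apply g_fun_moment. }
  auto_derive; [repeat split; apply ex_derive_moment|].
  rewrite !Derive_moment. field. lra.
Qed.

Lemma continuous_g_fun : continuity (g_fun (S n) kappa).
Proof.
  intros eta. apply continuity_pt_filterlim, (ex_derive_continuous (V := R_NormedModule)).
  eexists. apply is_derive_g_fun.
Qed.

Lemma g_fun_at_0 : g_fun (S n) kappa 0 = 0.
Proof. rewrite g_fun_moment, moment1_at_0. unfold Rdiv. ring. Qed.

Lemma g_fun_at_kappa_pos : 0 < g_fun (S n) kappa kappa.
Proof.
  rewrite g_fun_moment. replace (kappa / kappa) with 1 by (field; lra).
  pose proof (moment1_lt_moment0 n kappa). lra.
Qed.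

Lemma g_fun_pos_small_kappa (eta : R) :
  kappa <= INR (S n) + 1 -> 0 < eta -> 0 < g_fun (S n) kappa eta.
Proof.
  intros Hk Heta. rewrite g_fun_moment.
  pose proof (moment1_lt_eta_moment0 n eta Heta).
  pose proof (moment1_pos n eta Heta).
  apply (Rmult_lt_reg_l kappa); [exact kappa_pos|].
  replace (kappa * (eta / kappa * moment n 0 eta - moment n 1 eta))
    with (eta * moment n 0 eta - kappa * moment n 1 eta) by (field; lra).
  nra.
Qed.

Lemma g_fun_neg_near_0 :
  INR (S n) + 1 < kappa -> exists eta, 0 < eta < kappa /\ g_fun (S n) kappa eta < 0.
Proof.
  intros Hk.
  pose proof (moment2_at_0 n) as Hm2. pose proof (moment0_pos n 0).
  pose proof (pos_INR (S n)).
  assert (Hslope : / kappa * moment n 0 0 + 0 / kappa * moment n 1 0 - moment n 2 0 < 0).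
  { replace (moment n 2 0) with (/ (INR (S n) + 1) * moment n 0 0)
      by (rewrite <- Hm2; field; lra).
    assert (/ kappa < / (INR (S n) + 1)) by (apply Rinv_lt_contravar; nra).
    unfold Rdiv. rewrite Rmult_0_l, Rmult_0_l, Rplus_0_r. nra. }
  destruct (is_derive_neg_lt_right _ 0 _ kappa (is_derive_g_fun 0) Hslope kappa_pos)
    as [eta [Heta Hg]].
  rewrite g_fun_at_0 in Hg. exists eta. split; assumption.
Qed.

Lemma g_fun_positive_root :
  INR (S n) + 1 < kappa -> exists eta, 0 < eta < kappa /\ g_fun (S n) kappa eta = 0.
Proof.
  intros Hk.
  destruct (g_fun_neg_near_0 Hk) as [a [Ha Hga]].
  pose proof g_fun_at_kappa_pos as Hgk.
  destruct (IVT_gen (g_fun (S n) kappa) a kappa 0 continuous_g_fun) as [eta [Heta Hg]].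
  { rewrite Rmin_left, Rmax_right; lra. }
  rewrite Rmin_left, Rmax_right in Heta by lra.
  exists eta. split; [|exact Hg].
  split; [lra|]. destruct (proj2 Heta) as [Hlt| ->]; [exact Hlt|lra].
Qed.

Lemma moment_ratio_of_g_fun_root (eta : R) :
  0 < eta -> g_fun (S n) kappa eta = 0 -> moment_ratio n eta = / kappa.
Proof.
  intros Heta Hg. rewrite g_fun_moment in Hg. pose proof (moment0_pos n eta).
  unfold moment_ratio. replace (moment n 1 eta) with (eta / kappa * moment n 0 eta) by lra.
  field. lra.
Qed.

Lemma g_fun_positive_root_unique (a b : R) :
  0 < a -> 0 < b -> g_fun (S n) kappa a = 0 -> g_fun (S n) kappa b = 0 -> a = b.
Proof.
  intros Ha Hb Hga Hgb.
  apply moment_ratio_of_g_fun_root in Hga, Hgb; [|assumption ..].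
  destruct (Rtotal_order a b) as [Hab|[Hab|Hab]]; [|exact Hab|].
  - pose proof (moment_ratio_decreasing n a b ltac:(lra)). lra.
  - pose proof (moment_ratio_decreasing n b a ltac:(lra)). lra.
Qed.

End GFun.

Theorem proposition2p1 (d : nat) (kappa : R) (hd : (1 <= d)%nat) (hk : 0 < kappa) :
  (kappa <= INR d + 1 ->
     forall eta : R, 0 <= eta -> (g_fun d kappa eta = 0 <-> eta = 0)) /\
  (INR d + 1 < kappa ->
     g_fun d kappa 0 = 0 /\
     exists eta2 : R, 0 < eta2 < kappa /\ g_fun d kappa eta2 = 0 /\
       forall eta : R, 0 <= eta -> g_fun d kappa eta = 0 -> eta = 0 \/ eta = eta2).
Proof.
  destruct d as [|n]; [lia|].
  split.
  - intros Hsmall eta [Hpos| <-]; [|split; auto using g_fun_at_0].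
    pose proof (g_fun_pos_small_kappa n kappa hk eta Hsmall Hpos).
    split; intros; lra.
  - intros Hlarge. split; [apply g_fun_at_0|].
    destruct (g_fun_positive_root n kappa hk Hlarge) as [eta2 [Hrange Hroot]].
    exists eta2. split; [exact Hrange|]. split; [exact Hroot|].
    intros eta [Hpos| <-] Hg; [right|left; reflexivity].
    exact (g_fun_positive_root_unique n kappa hk eta eta2 Hpos (proj1 Hrange) Hg Hroot).
Qed.
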